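(* Let $m\ge 1$ and $d=2^{2m}-1$. If there exists a $(2^{2m},m,p)$-QRA coding with $p>1/2$, then there exist vectors $\vec s_1,\dots,\vec s_{2^{2m}}\in\mathbb{R}^{d}$ and reals $c_1,\dots,c_{2^{2m}}$ such that for every $w\in\{0,1\}^{2^{2m}}$ the set $$D_w=\{\vec r\in\mathbb{R}^{d} : \vec r\cdot\vec s_i>c_i \text{ for all } i \text{ with } w_i=0,\ \vec r\cdot\vec s_i<c_i \text{ for all } i \text{ with } w_i=1\}$$ is nonempty (indeed it contains the Bloch vector of an $m$-qubit state). In other words, $\mathbb{R}^{2^{2m}-1}$ is divided into $2^{2^{2m}}$ distinct nonempty regions by the $2^{2m}$ hyperplanes $\{\vec r:\vec r\cdot\vec s_i=c_i\}$.
   Context: An $(n,m,p)$-quantum random access (QRA) coding is a map assigning to each $n$-bit string $x\in\{0,1\}^n$ an $m$-qubit state $\rho_x$ (a positive semidefinite trace-one operator on $\mathbb{C}^{2^m}$) such that for every $i\in\{1,\dots,n\}$ there is a POVM $E^i=\{E^i_0,E^i_1\}$ (i.e. $E^i_0,E^i_1$ are positive semidefinite Hermitian operators on $\mathbb{C}^{2^m}$ with $E^i_0+E^i_1=I$) satisfying $\mathrm{Tr}(E^i_{x_i}\rho_x)\ge p$ for all $x\in\{0,1\}^n$, where $x_i$ is the $i$-th bit of $x$. Bloch vectors of $N$-level states ($N=2^m$): fix Hermitian traceless matrices $\lambda_1,\dots,\lambda_{N^2-1}$ with $\mathrm{Tr}(\lambda_i\lambda_j)=2\delta_{ij}$; every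 $N\times N$ density matrix can be written uniquely as $\rho=\frac1N I_N+\frac12\sum_{k=1}^{N^2-1}r_k\lambda_k$ with $\vec r=(r_1,\dots,r_{N^2-1})\in\mathbb{R}^{N^2-1}$, the Bloch vector of $\rho$. *)

From HB Require Import structures.
From mathcomp Require Import all_boot all_order all_algebra.
From mathcomp Require Import complex.
From mathcomp Require Import reals.
Set Implicit Arguments. Unset Strict Implicit. Unset Printing Implicit Defensive.
Import Order.TTheory GRing.Theory Num.Theory.
Local Open Scope ring_scope.
Local Open Scope complex_scope.

Section Defs.
Variable R : realType.
Local Notation C := R[i].

Definition adj {N : nat} (A : 'M[C]_N) : 'M[C]_N := (map_mx conjc A)^T.

Definition hermitian {N : nat} (A : 'M[C]_N) : Prop := adj A = A.

Definition psd {N : nat} (A : 'M[C]_N) : Prop :=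
  hermitian A /\
  forall v : 'cV[C]_N, 0 <= ((map_mx conjc v)^T *m A *m v) 0 0.

Definition density {N : nat} (rho : 'M[C]_N) : Prop := psd rho /\ \tr rho = 1.

Definition povm2 {N : nat} (E0 E1 : 'M[C]_N) : Prop :=
  psd E0 /\ psd E1 /\ E0 + E1 = 1%:M.

Definition QRA (n m : nat) (p : R) : Prop :=
  exists rho : {ffun 'I_n -> bool} -> 'M[C]_(2 ^ m),
    (forall x, density (rho x)) /\
    forall i : 'I_n, exists E0 E1 : 'M[C]_(2 ^ m),
      povm2 E0 E1 /\
      forall x : {ffun 'I_n -> bool},
        p <= complex.Re (\tr ((if x i then E1 else E0) *m rho x)).

Definition bloch_basis {N : nat} (lam : 'I_(N ^ 2 - 1) -> 'M[C]_N) : Prop :=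
  (forall k, hermitian (lam k)) /\ (forall k, \tr (lam k) = 0) /\
  (forall k l, \tr (lam k *m lam l) = (if k == l then 2 else 0)).

Definition is_bloch_vector {N : nat} (lam : 'I_(N ^ 2 - 1) -> 'M[C]_N)
    (rho : 'M[C]_N) (r : 'I_(N ^ 2 - 1) -> R) : Prop :=
  rho = (N%:R)^-1 *: 1%:M + 2^-1 *: \sum_k ((r k)%:C *: lam k).

Definition dotv {d : nat} (r s : 'I_d -> R) : R := \sum_k r k * s k.

Definition region {d n : nat} (s : 'I_n -> 'I_d -> R) (c : 'I_n -> R)
    (w : {ffun 'I_n -> bool}) (r : 'I_d -> R) : Prop :=
  forall i : 'I_n,
    (w i = false -> dotv r (s i) > c i) /\ (w i = true -> dotv r (s i) < c i).

End Defs.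

From Pilot Require Import Defs.
From HB Require Import structures.
From mathcomp Require Import all_boot all_order all_algebra.
From mathcomp Require Import complex.
From mathcomp Require Import reals.
From mathcomp Require Import lra.
Import Order.TTheory GRing.Theory Num.Theory.
Local Open Scope ring_scope.
Local Open Scope complex_scope.

(* The generators [lam k] together with the identity form a basis of all
   N x N matrices, orthogonal for the trace form, so every density matrix has
   a real Bloch vector [r], and for any operator [A] the quantity
   Re Tr(A rho) is an affine function [r . s_A - c_A] of [r].  Taking
   A_i := E^i_0 - E^i_1, the success condition p > 1/2 of the i-th decoding
   POVM says exactly that Re Tr(A_i rho_w) is positive when w_i = 0 and
   negative when w_i = 1, so the Bloch vector of rho_w lies in D_w. *)

Section ComplexRe.
Context {R : realType}.
Implicit Types (x y : R[i]) (a : R).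

Lemma ReD x y : complex.Re (x + y) = complex.Re x + complex.Re y.
Proof. exact: (@raddfD _ _ (@complex.Re R : Rcomplex R -> R)). Qed.

Lemma ReB x y : complex.Re (x - y) = complex.Re x - complex.Re y.
Proof. exact: (@raddfB _ _ (@complex.Re R : Rcomplex R -> R)). Qed.

Lemma Re_sum (I : finType) (F : I -> R[i]) :
  complex.Re (\sum_i F i) = \sum_i complex.Re (F i).
Proof. exact: (@raddf_sum _ _ (@complex.Re R : Rcomplex R -> R)). Qed.

Lemma Re_realM a x : complex.Re (a%:C * x) = a * complex.Re x.
Proof. by case: x => u v /=; rewrite mul0r subr0. Qed.

Lemma Re_natVM (n : nat) x :
  complex.Re ((n%:R : R[i])^-1 * x) = (n%:R)^-1 * complex.Re x.
Proof. by rewrite -Re_realM fmorphV rmorph_nat. Qed.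

Lemma conjc_fixed_real x : x^* = x -> x = (complex.Re x)%:C.
Proof. by case: x => u v [] h; congr Complex; lra. Qed.

End ComplexRe.

Section Adjoint.
Context {R : realType} {N : nat}.
Implicit Types A B : 'M[R[i]]_N.

Lemma mxtrace_adj A : \tr (adj A) = (\tr A)^*.
Proof.
by rewrite /adj mxtrace_tr /mxtrace rmorph_sum; apply: eq_bigr => i _; rewrite mxE.
Qed.

Lemma adjM A B : adj (A *m B) = adj B *m adj A.
Proof. by rewrite /adj map_mxM trmx_mul. Qed.

Lemma mxtrace_mul_hermitian_real A B :
  Defs.hermitian A -> Defs.hermitian B -> (\tr (A *m B))^* = \tr (A *m B).
Proof.
by rewrite /Defs.hermitian => hA hB; rewrite -mxtrace_adj adjM hA hB mxtrace_mulC.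
Qed.

End Adjoint.

Section BlochBasis.
Context {R : realType} {N : nat} (lam : 'I_(N ^ 2 - 1) -> 'M[R[i]]_N).
Hypothesis lam_basis : bloch_basis lam.

Local Notation d := (N ^ 2 - 1)%N.
Local Notation comb a b := (\sum_k a k *: lam k + b *: (1%:M : 'M[R[i]]_N)).

Lemma mxtrace_bloch_comb (a : 'I_d -> R[i]) b : \tr (comb a b) = b * N%:R.
Proof.
have [_ [lam_tr0 _]] := lam_basis.
rewrite mxtraceD raddf_sum /= big1 ?add0r => [|k _]; first by rewrite mxtraceZ mxtrace1.
by rewrite mxtraceZ lam_tr0 mulr0.
Qed.

Lemma mxtrace_bloch_comb_mul (a : 'I_d -> R[i]) b l :
  \tr (comb a b *m lam l) = a l * 2.
Proof.
have [_ [lam_tr0 lam_orth]] := lam_basis.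
rewrite mulmxDl mulmx_suml mxtraceD raddf_sum /= -scalemxAl mul1mx mxtraceZ.
rewrite lam_tr0 mulr0 addr0 (bigD1 l) //= big1 ?addr0 => [|k /negbTE kl].
  by rewrite -scalemxAl mxtraceZ lam_orth eqxx.
by rewrite -scalemxAl mxtraceZ lam_orth kl mulr0.
Qed.

Hypothesis N_gt0 : (0 < N)%N.

Lemma bloch_comb_eq0 (a : 'I_d -> R[i]) b : comb a b = 0 -> a =1 (fun=> 0) /\ b = 0.
Proof.
move=> ab0; split=> [l|].
  have /esym/eqP := mxtrace_bloch_comb_mul a b l.
  by rewrite ab0 mul0mx mxtrace0 mulf_eq0 pnatr_eq0 orbF => /eqP.
have /esym/eqP := mxtrace_bloch_comb a b.
by rewrite ab0 mxtrace0 mulf_eq0 pnatr_eq0 (negbTE (lt0n_neq0 N_gt0)) orbF => /eqP.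
Qed.

(* The [d + 1 = N * N] matrices [lam k] and [1] are linearly independent by
   [bloch_comb_eq0], hence span the whole matrix space. *)
Lemma bloch_comb_surj (M : 'M[R[i]]_N) : exists a b, M = comb a b.
Proof.
pose B := col_mx (\matrix_(k < d) mxvec (lam k)) (mxvec (1%:M : 'M[R[i]]_N)).
have mulB (v : 'rV_(d + 1)) :
    v *m B = mxvec (comb (fun k => lsubmx v 0 k) (rsubmx v 0 0)).
  rewrite -{1}(hsubmxK v) mul_row_col mulmx_sum_row linearD linear_sum /=.
  rewrite linearZ /= [rsubmx v]mx11_scalar mul_scalar_mx [in RHS]mxE.
  by congr (_ + _); apply: eq_bigr => k _; rewrite rowK linearZ.
have B_free : row_free B.
  apply: inj_row_free => v; rewrite mulB => /eqP; rewrite mxvec_eq0 => /eqP.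
  move=> /bloch_comb_eq0 [l0 r0]; rewrite -(hsubmxK v); apply/rowP => j.
  rewrite !mxE; case: splitP => k _; first by rewrite l0.
  by rewrite ord1 r0.
have B_full : row_full B.
  have dim : (d + 1 = N * N)%N by rewrite subnK ?expn_gt0 ?N_gt0 // mulnn.
  by move: B_free; rewrite /row_free /row_full => /eqP ->; rewrite dim.
have /submxP [u Mu] := submx_full (mxvec M) B_full.
by exists (fun k => lsubmx u 0 k), (rsubmx u 0 0); apply: (can_inj mxvecK); rewrite Mu mulB.
Qed.

Lemma bloch_vector_exists (rho : 'M[R[i]]_N) :
  Defs.hermitian rho -> \tr rho = 1 -> exists r, is_bloch_vector lam rho r.
Proof.
move=> rho_herm rho_tr1; have [a [b rho_ab]] := bloch_comb_surj rho.
have N0 : (N%:R : R[i]) != 0 by rewrite pnatr_eq0 -lt0n.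
have two0 : (2 : R[i]) != 0 by rewrite pnatr_eq0.
have b_inv : b = N%:R^-1.
  have := mxtrace_bloch_comb a b; rewrite -rho_ab rho_tr1 => bN.
  by apply: (mulIf N0); rewrite mulVf // -bN.
have a_real l : a l = (complex.Re (a l))%:C.
  apply: conjc_fixed_real; apply: (mulIf two0).
  have [lam_herm _] := lam_basis.
  have := mxtrace_bloch_comb_mul a b l; rewrite -rho_ab => tr_l.
  rewrite -tr_l -(mxtrace_mul_hermitian_real _ _ rho_herm (lam_herm l)) tr_l.
  by rewrite rmorphM rmorph_nat.
exists (fun k => 2 * complex.Re (a k)).
rewrite /is_bloch_vector {1}rho_ab b_inv addrC; congr (_ + _).
rewrite scaler_sumr; apply: eq_bigr => k _.
by rewrite scalerA rmorphM rmorph_nat mulrA mulVf // mul1r {1}a_real.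
Qed.

Definition hyperplane_normal (A : 'M[R[i]]_N) : 'I_d -> R :=
  fun k => complex.Re (\tr (A *m lam k)) / 2.

Definition hyperplane_offset (A : 'M[R[i]]_N) : R :=
  - (complex.Re (\tr A) / N%:R).

Lemma Re_mxtrace_bloch (A rho : 'M[R[i]]_N) r : is_bloch_vector lam rho r ->
  complex.Re (\tr (A *m rho)) = dotv r (hyperplane_normal A) - hyperplane_offset A.
Proof.
move=> ->; rewrite /dotv /hyperplane_normal /hyperplane_offset opprK.
rewrite mulmxDr -!scalemxAr mulmx1 mxtraceD !mxtraceZ mulmx_sumr raddf_sum /=.
rewrite ReD (Re_natVM N) (Re_natVM 2) [in LHS]mulrC addrC; congr (_ + _).
rewrite Re_sum mulr_sumr; apply: eq_bigr => k _.
by rewrite -scalemxAr mxtraceZ Re_realM mulrCA [_^-1 * _]mulrC.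
Qed.

End BlochBasis.

Lemma povm_bias_sign {R : realType} {N : nat} {E0 E1 rho : 'M[R[i]]_N} {p : R}
    (b : bool) :
  E0 + E1 = 1%:M -> \tr rho = 1 -> 2^-1 < p ->
  p <= complex.Re (\tr ((if b then E1 else E0) *m rho)) ->
  if b then complex.Re (\tr ((E0 - E1) *m rho)) < 0
  else 0 < complex.Re (\tr ((E0 - E1) *m rho)).
Proof.
move=> E_sum rho_tr1 p_gt ps.
have prob_sum : complex.Re (\tr (E0 *m rho)) + complex.Re (\tr (E1 *m rho)) = 1.
  by rewrite -ReD -mxtraceD -mulmxDl E_sum mul1mx rho_tr1.
rewrite mulmxBl raddfB ReB; case: b ps => /= ps; lra.
Qed.

Theorem lemma3 (R : realType) (m : nat) (p : R)
    (lam : 'I_((2 ^ m) ^ 2 - 1) -> 'M[R[i]]_(2 ^ m)) :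
  (1 <= m)%N ->
  bloch_basis lam ->
  QRA (2 ^ (2 * m)) m p -> 2^-1 < p ->
  exists (s : 'I_(2 ^ (2 * m)) -> 'I_((2 ^ m) ^ 2 - 1) -> R)
         (c : 'I_(2 ^ (2 * m)) -> R),
    forall w : {ffun 'I_(2 ^ (2 * m)) -> bool},
      (exists r, region s c w r) /\
      (exists (rho : 'M[R[i]]_(2 ^ m)) (r : 'I_((2 ^ m) ^ 2 - 1) -> R),
          density rho /\ is_bloch_vector lam rho r /\ region s c w r).
Proof.
move=> _ lam_basis [rho [rho_density decode]] p_gt.
have decode_pair i : exists E : 'M[R[i]]_(2 ^ m) * 'M_(2 ^ m),
    povm2 E.1 E.2 /\ forall x : {ffun _ -> bool},
      p <= complex.Re (\tr ((if x i then E.2 else E.1) *m rho x)).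
  by have [E0 [E1 ?]] := decode i; exists (E0, E1).
have [E E_spec] := fin_all_exists decode_pair.
pose A i := (E i).1 - (E i).2.
exists (fun i => hyperplane_normal lam (A i)), (fun i => hyperplane_offset (A i)) => w.
have [[rho_herm _] rho_tr1] := rho_density w.
have N_gt0 : (0 < 2 ^ m)%N by rewrite expn_gt0.
have [r rho_r] := bloch_vector_exists _ lam_basis N_gt0 _ rho_herm rho_tr1.
suff r_in : region (fun i => hyperplane_normal lam (A i))
                   (fun i => hyperplane_offset (A i)) w r.
  by split; [exists r | exists (rho w), r].
move=> i; have [[_ [_ E_sum]] success] := E_spec i.
have := povm_bias_sign (w i) E_sum rho_tr1 p_gt (success w).
rewrite (Re_mxtrace_bloch _ (A i) _ _ rho_r) subr_lt0 subr_gt0.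
by case: (w i) => bias; split.
Qed.
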